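(* Let $P \in S$ have degree $n \geq 1$ in $x$, and suppose that the degree in $x$ of every nonzero element of $C_S(P)$ is divisible by $n$. Then $C_S(P) = K[P]$.
   Context: Standing conventions: $K$ is a field, $R = K[y]$, $\sigma$ is a $K$-algebra endomorphism of $R$ with $\deg_y(\sigma(y)) > 1$, and $\delta$ is a $K$-linear $\sigma$-derivation of $R$ ($\delta(ab) = \sigma(a)\delta(b) + \delta(a)b$). $S = R[x;\sigma,\delta]$ is the Ore extension (polynomials $\sum r_i x^i$, $r_i\in R$, with $xr = \sigma(r)x + \delta(r)$). $C_S(P)$ is the centralizer of $P$ in $S$, and $K[P] = \{\sum_i c_i P^i : c_i \in K\}$. *)

From HB Require Import structures.
From mathcomp Require Import all_boot all_order all_algebra.
Set Implicit Arguments. Unset Strict Implicit. Unset Printing Implicit Defensive.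
Import GRing.Theory.
Local Open Scope ring_scope.

(* Elements of the Ore extension S = R[x; sigma, delta], R = K[y], are
   represented by their (unique) left normal form  sum_i r_i x^i, i.e. as
   polynomials in x with coefficients in R = {poly K}: type {poly {poly K}}. *)

(* left multiplication by x:  x * (sum r_i x^i) = sum (sigma r_i x^{i+1} + delta r_i x^i) *)
Definition ore_xmul (K : fieldType) (sigma delta : {poly K} -> {poly K})
  (q : {poly {poly K}}) : {poly {poly K}} :=
  'X * map_poly sigma q + map_poly delta q.

Definition ore_mul (K : fieldType) (sigma delta : {poly K} -> {poly K})
  (p q : {poly {poly K}}) : {poly {poly K}} :=
  \sum_(i < size p) (p`_i)%:P * iter i (ore_xmul sigma delta) q.

Definition ore_exp (K : fieldType) (sigma delta : {poly K} -> {poly K})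
  (p : {poly {poly K}}) (n : nat) : {poly {poly K}} :=
  iter n (ore_mul sigma delta p) 1.

Definition xdeg (K : fieldType) (p : {poly {poly K}}) : nat := (size p).-1.

Definition in_centralizer (K : fieldType) (sigma delta : {poly K} -> {poly K})
  (P Q : {poly {poly K}}) : Prop :=
  ore_mul sigma delta P Q = ore_mul sigma delta Q P.

Definition in_KP (K : fieldType) (sigma delta : {poly K} -> {poly K})
  (P Q : {poly {poly K}}) : Prop :=
  exists c : seq K,
    Q = \sum_(i < size c) ((c`_i)%:P)%:P * ore_exp sigma delta P i.

Definition is_K_alg_endo (K : fieldType) (sigma : {poly K} -> {poly K}) : Prop :=
  [/\ forall a b, sigma (a + b) = sigma a + sigma b,
      forall a b, sigma (a * b) = sigma a * sigma b,
      sigma 1 = 1 &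
      forall (c : K) a, sigma (c *: a) = c *: sigma a].

Definition is_sigma_derivation (K : fieldType) (sigma delta : {poly K} -> {poly K}) : Prop :=
  [/\ forall a b, delta (a + b) = delta a + delta b,
      forall (c : K) a, delta (c *: a) = c *: delta a &
      forall a b, delta (a * b) = sigma a * delta b + delta a * b].

From HB Require Import structures.
From mathcomp Require Import all_boot all_order all_algebra.
Set Implicit Arguments. Unset Strict Implicit. Unset Printing Implicit Defensive.
Import GRing.Theory.
Local Open Scope ring_scope.

(* K[P] is contained in C(P) because the Ore product is associative and
   bilinear over K (Section OreArithmetic).  Conversely, take Q in C(P) of degree
   m = n k.  The leading coefficients of P Q and Q P are
   lead(P) sigma^n(lead Q) and lead(Q) sigma^m(lead P) (Section OreDegree), so
   both z = lead(Q) and z = lead(P^k) solve  lead(P) sigma^n(z) = z w.  Since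
   sigma^n is composition with a polynomial of degree at least 2, such nonzero
   solutions are unique up to a scalar (Section CompositionEquation).  Hence
   Q - c P^k has smaller degree and still lies in C(P); induction on the degree
   finishes the proof (Section Centralizer), using that K[P] is closed under
   addition (Section KPspan). *)

Section CompositionEquation.
Variables (K : fieldType) (t : {poly K}).
Hypothesis t_deg : (1 < (size t).-1)%N.

Local Notation tau a := (a \Po t).

(* t itself is nonconstant, so composition with t preserves nonzeroness. *)
Lemma size_t_gt1 : (1 < size t)%N.
Proof. by apply: leq_trans t_deg _; rewrite leq_pred. Qed.

(* Composition with t multiplies degrees by deg t >= 2, so it can only fail
   to raise the size of a nonzero polynomial when that polynomial is constant. *)
Lemma comp_size_le_const (a : {poly K}) : a != 0 ->
  (size (tau a) <= size a)%N -> exists2 c : K, c != 0 & a = c%:P.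
Proof.
move=> a0 hle.
have ta0 : tau a != 0 by rewrite comp_poly_eq0 ?size_t_gt1.
have deg_le : ((size a).-1 * (size t).-1 <= (size a).-1)%N.
  by rewrite -size_comp_poly -!subn1 leq_sub2r.
have deg0 : (size a).-1 = 0%N.
  apply/eqP; apply: contraTT deg_le; rewrite -lt0n -ltnNge => dpos.
  by rewrite -{1}(muln1 (size a).-1) ltn_pmul2l.
have /size_poly1P[c c0 ->] : size a == 1%N.
  by rewrite -(prednK (_ : 0 < size a)%N) ?deg0 // size_poly_gt0.
by exists c.
Qed.

(* If a and b are coprime and  tau(a) b = tau(b) a, then tau(a) divides a and
   tau(b) divides b, hence both a and b are constants. *)
Lemma comp_coprime_const (a b : {poly K}) : a != 0 -> b != 0 -> coprimep a b ->
  tau a * b = tau b * a -> exists2 c : K, c != 0 & a = c%:P * b.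
Proof.
move=> a0 b0 cop e.
have tcop : coprimep (tau a) (tau b) by exact: coprimep_comp_poly.
have dva : tau a %| a by rewrite -(Gauss_dvdpr a tcop) -e dvdp_mulIl.
have dvb : tau b %| b.
  by rewrite -(Gauss_dvdpr b (_ : coprimep _ (tau a))) 1?coprimep_sym // e dvdp_mulIl.
have [ca ca0 ->] := comp_size_le_const a0 (dvdp_leq a0 dva).
have [cb cb0 ->] := comp_size_le_const b0 (dvdp_leq b0 dvb).
by exists (ca / cb); rewrite ?mulf_neq0 ?invr_eq0 // -polyCM divfK.
Qed.

Lemma comp_eq_unique (p w z1 z2 : {poly K}) : p != 0 -> z1 != 0 -> z2 != 0 ->
  p * tau z1 = z1 * w -> p * tau z2 = z2 * w -> exists c : K, z1 = c%:P * z2.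
Proof.
move=> p0 z10 z20 h1 h2.
have e : tau z1 * z2 = tau z2 * z1.
  by apply: (mulfI p0); rewrite !mulrA h1 h2 mulrAC [RHS]mulrAC (mulrC z2).
set g := gcdp z1 z2; have g0 : g != 0 by rewrite gcdp_eq0 negb_and z10.
have e1 : z1 = (z1 %/ g) * g by rewrite divpK // dvdp_gcdl.
have e2 : z2 = (z2 %/ g) * g by rewrite divpK // dvdp_gcdr.
have cop : coprimep (z1 %/ g) (z2 %/ g) by apply: coprimep_div_gcd; rewrite z10.
move: e1 e2 cop; set a := z1 %/ g; set b := z2 %/ g => e1 e2 cop.
have a0 : a != 0 by apply: contraNneq z10 => a0; rewrite e1 a0 mul0r.
have b0 : b != 0 by apply: contraNneq z20 => b0; rewrite e2 b0 mul0r.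
have eab : tau a * b = tau b * a.
  have tg0 : tau g * g != 0 by rewrite mulf_neq0 // comp_poly_eq0 ?size_t_gt1.
  by apply: (mulIf tg0); move: e; rewrite e1 e2 !comp_polyM mulrACA => ->; rewrite mulrACA.
have [c _ ec] := comp_coprime_const a0 b0 cop eab.
by exists c; rewrite e1 e2 ec mulrA.
Qed.
End CompositionEquation.

Section OreArithmetic.
Variables (K : fieldType) (sigma delta : {poly K} -> {poly K}).
Hypothesis sigma_endo : is_K_alg_endo sigma.
Hypothesis delta_der : is_sigma_derivation sigma delta.

Implicit Types (a b r : {poly K}) (p q u v : {poly {poly K}}).

Local Notation xmul := (ore_xmul sigma delta).
Local Notation omul := (ore_mul sigma delta).
Local Notation oexp := (ore_exp sigma delta).

Lemma sigmaD a b : sigma (a + b) = sigma a + sigma b. Proof. by case: sigma_endo. Qed.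
Lemma sigmaM a b : sigma (a * b) = sigma a * sigma b. Proof. by case: sigma_endo. Qed.
Lemma sigma1 : sigma 1 = 1. Proof. by case: sigma_endo. Qed.
Lemma sigma0 : sigma 0 = 0.
Proof. by apply: (@addrI _ (sigma 0)); rewrite -sigmaD !addr0. Qed.
Lemma sigmaC c : sigma c%:P = c%:P.
Proof. by case: sigma_endo => _ _ _ sZ; rewrite -alg_polyC sZ sigma1. Qed.

Lemma deltaD a b : delta (a + b) = delta a + delta b. Proof. by case: delta_der. Qed.
Lemma deltaM a b : delta (a * b) = sigma a * delta b + delta a * b.
Proof. by case: delta_der. Qed.
Lemma delta0 : delta 0 = 0.
Proof. by apply: (@addrI _ (delta 0)); rewrite -deltaD !addr0. Qed.
(* delta kills the constants: delta 1 = delta 1 + delta 1 by the twisted Leibniz rule. *)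
Lemma deltaC c : delta c%:P = 0.
Proof.
have d1 : delta 1 = 0.
  have := deltaM 1 1; rewrite !mulr1 sigma1 mul1r => h.
  by apply: (@addrI _ (delta 1)); rewrite addr0 -h.
by case: delta_der => _ dZ _; rewrite -alg_polyC dZ d1 scaler0.
Qed.

Lemma sigma_comp a : sigma a = a \Po sigma 'X.
Proof.
elim/poly_ind: a => [|a c IH]; first by rewrite sigma0 comp_poly0.
by rewrite sigmaD sigmaM IH comp_polyD comp_polyM comp_polyX sigmaC comp_polyC.
Qed.

Lemma coef_xmul q i : (xmul q)`_i =
  (if i == 0%N then 0 else sigma q`_i.-1) + delta q`_i.
Proof. by rewrite /ore_xmul coefD coefXM !coef_map_id0 ?sigma0 ?delta0. Qed.

Lemma xmulD u v : xmul (u + v) = xmul u + xmul v.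
Proof.
apply/polyP=> i; rewrite coefD !coef_xmul !coefD sigmaD deltaD.
by case: (i == 0%N); rewrite ?add0r // addrACA.
Qed.

Lemma xmul0 : xmul 0 = 0.
Proof. by apply: (@addrI _ (xmul 0)); rewrite -xmulD !addr0. Qed.

Lemma xmulCM r q : xmul (r%:P * q) = (sigma r)%:P * xmul q + (delta r)%:P * q.
Proof.
apply/polyP=> i; rewrite coef_xmul [RHS]coefD !coefCM coef_xmul deltaM mulrDr.
by case: (i == 0%N); rewrite ?mulr0 ?add0r // sigmaM addrA.
Qed.

Lemma xmulK c q : xmul ((c%:P)%:P * q) = (c%:P)%:P * xmul q.
Proof. by rewrite xmulCM sigmaC deltaC mul0r addr0. Qed.

Lemma iter_xmulD i u v : iter i xmul (u + v) = iter i xmul u + iter i xmul v.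
Proof. by elim: i => //= i ->; rewrite xmulD. Qed.
Lemma iter_xmul0 i : iter i xmul 0 = 0.
Proof. by elim: i => //= i ->; rewrite xmul0. Qed.
Lemma iter_xmulK i c q : iter i xmul ((c%:P)%:P * q) = (c%:P)%:P * iter i xmul q.
Proof. by elim: i => //= i ->; rewrite xmulK. Qed.

Lemma iter_xmul1 i : iter i xmul 1 = 'X^i.
Proof.
elim: i => //= i ->; apply/polyP=> j; rewrite coef_xmul !coefXn.
have const_bool (b : bool) : (b%:R : {poly K}) = (b%:R)%:P by case: b.
rewrite (const_bool (j == i)) deltaC addr0; case: j => [|j] //=.
by rewrite const_bool sigmaC -const_bool.
Qed.

Lemma omul_wide (N : nat) p q : (size p <= N)%N ->
  omul p q = \sum_(i < N) (p`_i)%:P * iter i xmul q.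
Proof.
move=> hN; rewrite /ore_mul (big_ord_widen N (fun i => (p`_i)%:P * iter i xmul q) hN).
rewrite big_mkcond; apply: eq_bigr => i _.
by case: ltnP => // hi; rewrite nth_default // mul0r.
Qed.

Lemma omulDl p p' q : omul (p + p') q = omul p q + omul p' q.
Proof.
set N := maxn (size p) (size p').
rewrite (@omul_wide N) ?(leq_trans (size_polyD _ _)) // (@omul_wide N p) ?leq_maxl //.
rewrite (@omul_wide N p') ?leq_maxr // -big_split /=; apply: eq_bigr => i _.
by rewrite coefD polyCD mulrDl.
Qed.

Lemma omul0l q : omul 0 q = 0.
Proof. by rewrite /ore_mul size_poly0 big_ord0. Qed.

Lemma omulCl r p q : omul (r%:P * p) q = r%:P * omul p q.
Proof.
rewrite (@omul_wide (size p)); last by rewrite mul_polyC size_scale_leq.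
rewrite /ore_mul mulr_sumr; apply: eq_bigr => i _.
by rewrite coefCM polyCM mulrA.
Qed.

Lemma omulDr p q q' : omul p (q + q') = omul p q + omul p q'.
Proof.
by rewrite /ore_mul -big_split /=; apply: eq_bigr => i _; rewrite iter_xmulD mulrDr.
Qed.

Lemma omul0r p : omul p 0 = 0.
Proof. by rewrite /ore_mul big1 // => i _; rewrite iter_xmul0 mulr0. Qed.

Lemma omulKr c p q : omul p ((c%:P)%:P * q) = (c%:P)%:P * omul p q.
Proof.
by rewrite /ore_mul mulr_sumr; apply: eq_bigr => i _; rewrite iter_xmulK mulrCA.
Qed.

Lemma omul_suml I (r : seq I) (F : I -> {poly {poly K}}) q :
  omul (\sum_(i <- r) F i) q = \sum_(i <- r) omul (F i) q.
Proof. by apply: (big_morph (omul^~ q)); [move=> u v; exact: omulDl | exact: omul0l]. Qed.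

Lemma omul_sumr I (r : seq I) (F : I -> {poly {poly K}}) p :
  omul p (\sum_(i <- r) F i) = \sum_(i <- r) omul p (F i).
Proof. by apply: (big_morph (omul p)); [exact: omulDr | exact: omul0r]. Qed.

Lemma omulXl u v : omul ('X * u) v = omul u (xmul v).
Proof.
rewrite (@omul_wide (size u).+1); last first.
  have [->|u0] := eqVneq u 0; first by rewrite mulr0 size_poly0.
  by rewrite mulrC size_mulX.
rewrite big_ord_recl coefXM /= mul0r add0r /ore_mul; apply: eq_bigr => i _.
by rewrite coefXM /= add0n -iterSr iterS.
Qed.

Lemma omul_map (f : {poly K} -> {poly K}) u v : f 0 = 0 ->
  omul (map_poly f u) v = \sum_(i < size u) (f u`_i)%:P * iter i xmul v.
Proof.
move=> f0; rewrite (@omul_wide (size u)); last by rewrite /map_poly size_poly.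
by apply: eq_bigr => i _; rewrite coef_map_id0.
Qed.

(* Associativity reduces to  x (u v) = (x u) v: left multiplication by x
   commutes with right multiplication by v. *)
Lemma xmul_omul u v : xmul (omul u v) = omul (xmul u) v.
Proof.
have xmul_sum I (r : seq I) F : xmul (\sum_(i <- r) F i) = \sum_(i <- r) xmul (F i).
  by apply: (big_morph xmul); [exact: xmulD | exact: xmul0].
rewrite {1}/ore_mul xmul_sum [xmul u]/ore_xmul omulDl omulXl.
rewrite !omul_map ?sigma0 ?delta0 // /ore_mul -big_split /=.
by apply: eq_bigr => i _; rewrite xmulCM -iterSr iterS.
Qed.

Lemma omulA p q u : omul (omul p q) u = omul p (omul q u).
Proof.
have iter_omul k v : iter k xmul (omul q v) = omul (iter k xmul q) v.
  by elim: k => //= k ->; rewrite xmul_omul.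
rewrite [omul p (omul q u)]/ore_mul; under eq_bigr do rewrite iter_omul -omulCl.
by rewrite -omul_suml.
Qed.

Lemma omul1l q : omul 1 q = q.
Proof. by rewrite /ore_mul size_poly1 big_ord1 coef1 /= mul1r. Qed.

Lemma omul1r q : omul q 1 = q.
Proof.
by rewrite /ore_mul; under eq_bigr do rewrite iter_xmul1 mul_polyC; rewrite -poly_def coefK.
Qed.

Lemma oexp_comm P k : omul (oexp P k) P = omul P (oexp P k).
Proof. by elim: k => [|k IH] /=; rewrite ?omul1l ?omul1r // omulA IH. Qed.

Lemma KP_centralizer P Q : in_KP sigma delta P Q -> in_centralizer sigma delta P Q.
Proof.
move=> [c ->]; rewrite /in_centralizer omul_sumr omul_suml.
by apply: eq_bigr => i _; rewrite omulKr omulCl oexp_comm.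
Qed.

Lemma centralizerD P q u : in_centralizer sigma delta P q ->
  in_centralizer sigma delta P u -> in_centralizer sigma delta P (q + u).
Proof. by rewrite /in_centralizer omulDr omulDl => -> ->. Qed.

End OreArithmetic.

Section OreDegree.
Variables (K : fieldType) (sigma delta : {poly K} -> {poly K}).
Hypothesis sigma_endo : is_K_alg_endo sigma.
Hypothesis sigma_deg : (1 < (size (sigma 'X)).-1)%N.

Implicit Types (a : {poly K}) (p q u : {poly {poly K}}).

Local Notation xmul := (ore_xmul sigma delta).
Local Notation omul := (ore_mul sigma delta).

Lemma iter_sigma_comp n a : iter n sigma a = a \Po iter n sigma 'X.
Proof.
elim: n => [|n IH] /=; first by rewrite comp_polyXr.
by rewrite IH (sigma_comp sigma_endo) [in RHS](sigma_comp sigma_endo) comp_polyA.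
Qed.

Lemma iter_sigma_deg n : (size (iter n sigma 'X)).-1 = ((size (sigma 'X)).-1 ^ n)%N.
Proof.
elim: n => [|n IH] /=; first by rewrite size_polyX.
by rewrite (sigma_comp sigma_endo) size_comp_poly IH expnS mulnC.
Qed.

Lemma iter_sigma_deg_gt1 n : (0 < n)%N -> (1 < (size (iter n sigma 'X)).-1)%N.
Proof.
case: n => // n _; rewrite iter_sigma_deg expnS.
by apply: leq_trans sigma_deg _; rewrite leq_pmulr // expn_gt0 ltnW.
Qed.

Lemma iter_sigma_neq0 n a : a != 0 -> iter n sigma a != 0.
Proof.
move=> a0; rewrite iter_sigma_comp comp_poly_eq0 //.
have [->|n0] := posnP n; first by rewrite size_polyX.
exact: leq_trans (iter_sigma_deg_gt1 n0) (leq_pred _).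
Qed.

Lemma iter_xmul_lead i q : q != 0 ->
  size (iter i xmul q) = (size q + i)%N /\
  lead_coef (iter i xmul q) = iter i sigma (lead_coef q).
Proof.
move=> q0; elim: i => [|i [IHs IHl]] /=; first by rewrite addn0.
set u := iter i xmul q.
have u0 : u != 0 by rewrite -size_poly_gt0 IHs addn_gt0 size_poly_gt0 q0.
have lu0 : sigma (lead_coef u) != 0.
  by apply: (iter_sigma_neq0 1); rewrite lead_coef_eq0.
have sm : size (map_poly sigma u) = size u by rewrite size_map_poly_id0.
have m0 : map_poly sigma u != 0 by rewrite -size_poly_gt0 sm size_poly_gt0.
have sd : (size (map_poly delta u) < size ('X * map_poly sigma u)%R)%N.
  by rewrite mulrC size_mulX // sm ltnS size_poly.
rewrite /ore_xmul size_polyDl // lead_coefDl // mulrC lead_coefMX size_mulX //.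
by rewrite sm IHs addnS lead_coef_map_id0 ?(sigma0 sigma_endo) // IHl.
Qed.

Lemma omul_lead p q : p != 0 -> q != 0 ->
  size (omul p q) = (size p + size q).-1 /\
  lead_coef (omul p q) = lead_coef p * iter (size p).-1 sigma (lead_coef q).
Proof.
move=> p0 q0; set n := (size p).-1.
have sp : size p = n.+1 by rewrite prednK // size_poly_gt0.
have [st lt] := iter_xmul_lead n q0.
have pn0 : p`_n != 0 by rewrite -lead_coefE lead_coef_eq0.
have s_top : size ((p`_n)%:P * iter n xmul q) = (size q + n)%N by rewrite size_Cmul.
have s_low : (size (\sum_(i < n) (p`_i)%:P * iter i xmul q)%R < size q + n)%N.
  have qn : (0 < size q + n)%N by rewrite addn_gt0 size_poly_gt0 q0.
  rewrite -(prednK qn) ltnS; apply: (big_ind (fun u => size u <= (size q + n).-1)%N).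
  - by rewrite size_poly0.
  - by move=> u v hu hv; rewrite (leq_trans (size_polyD _ _)) // geq_max hu hv.
  move=> i _; rewrite mul_polyC (leq_trans (size_scale_leq _ _)) //.
  have [-> _] := iter_xmul_lead i q0.
  by rewrite -ltnS (prednK qn) ltn_add2l.
rewrite (@omul_wide _ _ _ n.+1) ?sp // big_ord_recr /= addrC.
rewrite size_polyDl ?s_top // lead_coefDl ?s_top // addnC.
by rewrite mul_polyC lead_coefZ lt lead_coefE.
Qed.

Lemma commuting_lead p q : p != 0 -> q != 0 -> omul p q = omul q p ->
  lead_coef p * iter (xdeg p) sigma (lead_coef q) =
  lead_coef q * iter (xdeg q) sigma (lead_coef p).
Proof.
move=> p0 q0 e.
have [_ <-] := omul_lead p0 q0; have [_ <-] := omul_lead q0 p0.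
by rewrite e.
Qed.
End OreDegree.

Section KPspan.
Variables (K : fieldType) (sigma delta : {poly K} -> {poly K}).
Variable P : {poly {poly K}}.

Local Notation oexp := (ore_exp sigma delta).

Lemma KP_sum_wide (c : seq K) N : (size c <= N)%N ->
  \sum_(i < size c) ((c`_i)%:P)%:P * oexp P i = \sum_(i < N) ((c`_i)%:P)%:P * oexp P i.
Proof.
move=> hN; rewrite (big_ord_widen N (fun i => ((c`_i)%:P)%:P * oexp P i) hN).
rewrite big_mkcond; apply: eq_bigr => i _.
by case: ltnP => // hi; rewrite nth_default // mul0r.
Qed.

Lemma in_KP0 : in_KP sigma delta P 0.
Proof. by exists [::]; rewrite big_ord0. Qed.

Lemma in_KPD Q R : in_KP sigma delta P Q -> in_KP sigma delta P R ->
  in_KP sigma delta P (Q + R).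
Proof.
move=> [c ->] [d ->]; set N := maxn (size c) (size d).
exists (mkseq (fun i => c`_i + d`_i) N); rewrite size_mkseq.
rewrite (KP_sum_wide (leq_maxl _ _ : size c <= N)%N).
rewrite (KP_sum_wide (leq_maxr _ _ : size d <= N)%N).
by rewrite -big_split; apply: eq_bigr => i _; rewrite nth_mkseq // !polyCD mulrDl.
Qed.

Lemma in_KP_monomial (c : K) k : in_KP sigma delta P ((c%:P)%:P * oexp P k).
Proof.
exists (rcons (nseq k 0) c); rewrite size_rcons size_nseq big_ord_recr /=.
rewrite nth_rcons size_nseq ltnn eqxx big1 ?add0r // => i _.
by rewrite nth_rcons size_nseq ltn_ord nth_nseq ltn_ord mul0r.
Qed.
End KPspan.

Section Centralizer.
Variables (K : fieldType) (sigma delta : {poly K} -> {poly K}).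
Hypothesis sigma_endo : is_K_alg_endo sigma.
Hypothesis delta_der : is_sigma_derivation sigma delta.
Hypothesis sigma_deg : (1 < (size (sigma 'X)).-1)%N.
Variable P : {poly {poly K}}.
Hypothesis P_deg : (1 <= xdeg P)%N.

Local Notation oexp := (ore_exp sigma delta).
Local Notation cent := (in_centralizer sigma delta P).

Lemma P_neq0 : P != 0.
Proof. by rewrite -size_poly_gt0; move: P_deg; rewrite /xdeg; case: (size P). Qed.

Lemma oexp_size k : size (oexp P k) = (xdeg P * k).+1.
Proof.
elim: k => [|k IH]; first by rewrite /= size_poly1 muln0.
have Pk0 : oexp P k != 0 by rewrite -size_poly_gt0 IH.
have [-> _] := omul_lead delta sigma_endo sigma_deg P_neq0 Pk0.
have sP : size P = (xdeg P).+1 by rewrite prednK // size_poly_gt0 P_neq0.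
by rewrite IH sP addSn addnS mulnS.
Qed.

(* Main step: if deg P divides deg Q for Q in C(P), the leading term of Q is
   a scalar multiple of that of P^k, k = deg Q / deg P.  Indeed both lead(Q)
   and lead(P^k) solve  lead(P) sigma^n(z) = z sigma^m(lead P),  whose nonzero
   solutions are unique up to scalars (comp_eq_unique with t = sigma^n(y)). *)
Lemma centralizer_lead_cancel (Q : {poly {poly K}}) :
  Q != 0 -> cent Q -> (xdeg P %| xdeg Q)%N ->
  exists (c : K) (k : nat), (size (Q + (c%:P)%:P * oexp P k)%R < size Q)%N.
Proof.
move=> Q0 cQ dvd; set m := xdeg Q; set k := (m %/ xdeg P)%N.
have mk : (xdeg P * k)%N = m by rewrite mulnC divnK.
have sQ : size Q = m.+1 by rewrite prednK // size_poly_gt0.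
have sPk : size (oexp P k) = m.+1 by rewrite oexp_size mk.
have Pk0 : oexp P k != 0 by rewrite -size_poly_gt0 sPk.
have eQ := commuting_lead sigma_endo sigma_deg P_neq0 Q0 cQ.
have ePk := commuting_lead sigma_endo sigma_deg P_neq0 Pk0
  (esym (oexp_comm sigma_endo delta_der P k)).
have dPk : xdeg (oexp P k) = m by rewrite /xdeg sPk.
rewrite dPk in ePk.
rewrite [iter (xdeg P) sigma _](iter_sigma_comp sigma_endo) in eQ.
rewrite [iter (xdeg P) sigma _](iter_sigma_comp sigma_endo) in ePk.
have [lP lQ lPk] : [/\ lead_coef P != 0, lead_coef Q != 0 & lead_coef (oexp P k) != 0].
  by rewrite !lead_coef_eq0 P_neq0 Q0 Pk0.
have [c ec] := comp_eq_unique (iter_sigma_deg_gt1 sigma_endo sigma_deg P_deg)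
  lP lQ lPk eQ ePk.
exists (- c), k; rewrite sQ ltnS; apply/leq_sizeP => j; rewrite leq_eqVlt.
case/orP=> [/eqP <-|hj]; last first.
  by rewrite coefD coefCM !nth_default ?mulr0 ?addr0 ?sQ ?sPk.
rewrite coefD coefCM.
have -> : Q`_m = lead_coef Q by rewrite lead_coefE sQ.
have -> : (oexp P k)`_m = lead_coef (oexp P k) by rewrite lead_coefE sPk.
by rewrite ec !polyCN mulNr addrN.
Qed.

Hypothesis deg_dvd : forall Q : {poly {poly K}}, Q != 0 -> cent Q -> (xdeg P %| xdeg Q)%N.

(* Strong induction on the degree: cancel the leading term of Q against a
   scalar multiple of a power of P and stay inside C(P). *)
Lemma centralizer_in_KP Q : cent Q -> in_KP sigma delta P Q.
Proof.
elim: {Q}(size Q).+1 {-2}Q (ltnSn (size Q)) => // s IH Q sQ cQ.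
have [->|Q0] := eqVneq Q 0; first exact: in_KP0.
have [c [k lt]] := centralizer_lead_cancel Q0 cQ (deg_dvd Q0 cQ).
have cR : cent (Q + (c%:P)%:P * oexp P k).
  apply: (centralizerD sigma_endo delta_der cQ).
  exact: (KP_centralizer sigma_endo delta_der (in_KP_monomial _ _ _ _ _)).
have -> : Q = (Q + (c%:P)%:P * oexp P k) + ((- c)%:P)%:P * oexp P k.
  by rewrite !polyCN mulNr addrK.
apply: in_KPD (in_KP_monomial _ _ _ _ _); apply: IH cR.
exact: leq_trans lt _.
Qed.
End Centralizer.

Unset Implicit Arguments. Set Strict Implicit.

Theorem lemma5p2 (K : fieldType) (sigma delta : {poly K} -> {poly K})
  (Hsigma : is_K_alg_endo sigma)
  (Hdeg : (1 < (size (sigma 'X)).-1)%N)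
  (Hdelta : is_sigma_derivation sigma delta)
  (P : {poly {poly K}})
  (HP : (1 <= xdeg P)%N)
  (Hdiv : forall Q : {poly {poly K}}, Q != 0 ->
            in_centralizer sigma delta P Q -> (xdeg P %| xdeg Q)%N) :
  forall Q : {poly {poly K}},
    in_centralizer sigma delta P Q <-> in_KP sigma delta P Q.
Proof.
move=> Q; split; first exact: (centralizer_in_KP Hsigma Hdelta Hdeg HP Hdiv).
exact: KP_centralizer.
Qed.
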